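(* For any special object $L$ of $\mathcal V$, the degree $\beta(L)$ of the minimal polynomial $m_L(x)$ satisfies $\beta(L)\equiv t\pmod 2$.
   Context: Let $\Bbbk$ be a field of characteristic $\neq2$, $t\in\{0,1\}$, and let $\mathcal{NB}_t$ be the nil-Brauer category, regarded as an ungraded strict $\Bbbk$-linear monoidal category (tensor $\star$, unit $\mathbb1$, composition $\circ$) generated by an object $B$ and morphisms $x:B\to B$, $\tau:B\star B\to B\star B$, $\cap:B\star B\to\mathbb1$, $\cup:\mathbb1\to B\star B$ with relations ($1=1_B$): $\tau\circ\tau=0$; $(\tau\star1)\circ(1\star\tau)\circ(\tau\star1)=(1\star\tau)\circ(\tau\star1)\circ(1\star\tau)$; $\cap\circ\cup=t1_{\mathbb1}$; $(\cap\star1)\circ(1\star\cup)=1=(1\star\cap)\circ(\cup\star1)$; $\cap\circ\tau=0$; $(1\star\cap)\circ(\tau\star1)=(\cap\star1)\circ(1\star\tau)$; $(x\star1)\circ\tau-\tau\circ(1\star x)=1\star1-\cup\circ\cap$; $\cap\circ(1\star x)=-\cap\circ(x\star1)$. Let $\mathcal V$ be a strict $\mathcal{NB}_t$-module category, i.e. a $\Bbbk$-linear category with a strict $\Bbbk$-linear monoidal functor $\mu$ from $\mathcal{NB}_t$ to the monoidal category of $\Bbbk$-linear endofunctors of $\mathcal V$; write $B$ for $\mu(B)$. An object $L$ is special if $\mathrm{End}_{\mathcal V}(L)=\Bbbk$ and $\mathrm{End}_{\mathcal V}(BL)$ is finite-dimensional; $m_L(x)$ is the minimal polynomial of $\mu(x)_L:BL\to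 BL$ (equal to $1$ if $BL=0$). *)

From HB Require Import structures.
From mathcomp Require Import all_boot all_order all_algebra.
Set Implicit Arguments. Unset Strict Implicit. Unset Printing Implicit Defensive.
Import GRing.Theory.
Local Open Scope ring_scope.

Record kcat (k : fieldType) := KCat {
  ob : Type;
  hom : ob -> ob -> lmodType k;
  comp : forall X Y Z : ob, hom Y Z -> hom X Y -> hom X Z;
  idm : forall X : ob, hom X X;
  comp_linl : forall X Y Z (a : k) (f g : hom Y Z) (h : hom X Y),
      comp (a *: f + g) h = a *: comp f h + comp g h;
  comp_linr : forall X Y Z (a : k) (f : hom Y Z) (g h : hom X Y),
      comp f (a *: g + h) = a *: comp f g + comp f h;
  compA : forall W X Y Z (f : hom Y Z) (g : hom X Y) (h : hom W X),
      comp f (comp g h) = comp (comp f g) h;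
  comp1m : forall X Y (f : hom X Y), comp (idm Y) f = f;
  compm1 : forall X Y (f : hom X Y), comp f (idm X) = f
}.
Arguments ob {_} _.
Arguments hom {_} _ _ _.
Arguments comp {_ _ _ _ _} _ _.
Arguments idm {_} _ _.

(** A strict k-linear monoidal
    functor mu : NB_t -> End(V) is the same as the image B = mu(B) (a k-linear
    endofunctor of V) together with natural transformations
    x = mu(x) : B => B, tau = mu(tau) : B B => B B, cap = mu(cap) : B B => Id,
    cup = mu(cup) : Id => B B, satisfying the defining relations of NB_t.
    Convention for the tensor product of endofunctors: F * G = F o G, and for
    natural transformations (f * g)_L = f_{G' L} o F(g_L); hence
    (tau*1)_L = tau_{B L}, (1*tau)_L = B(tau_L), etc. *)
Record NBmodule (k : fieldType) (t : bool) (V : kcat k) := NBMod {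
  Bo : ob V -> ob V;
  Bm : forall X Y : ob V, hom V X Y -> hom V (Bo X) (Bo Y);
  Bm_lin : forall X Y (a : k) (f g : hom V X Y),
      Bm (a *: f + g) = a *: Bm f + Bm g;
  Bm_id : forall X, Bm (idm V X) = idm V (Bo X);
  Bm_comp : forall X Y Z (f : hom V Y Z) (g : hom V X Y),
      Bm (comp f g) = comp (Bm f) (Bm g);
  xx : forall X, hom V (Bo X) (Bo X);
  tau : forall X, hom V (Bo (Bo X)) (Bo (Bo X));
  cap : forall X, hom V (Bo (Bo X)) X;
  cup : forall X, hom V X (Bo (Bo X));
  xx_nat : forall X Y (f : hom V X Y), comp (xx Y) (Bm f) = comp (Bm f) (xx X);
  tau_nat : forall X Y (f : hom V X Y),
      comp (tau Y) (Bm (Bm f)) = comp (Bm (Bm f)) (tau X);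
  cap_nat : forall X Y (f : hom V X Y), comp (cap Y) (Bm (Bm f)) = comp f (cap X);
  cup_nat : forall X Y (f : hom V X Y), comp (cup Y) f = comp (Bm (Bm f)) (cup X);
  rel_tau2 : forall X, comp (tau X) (tau X) = 0;
  rel_braid : forall X,
      comp (tau (Bo X)) (comp (Bm (tau X)) (tau (Bo X)))
      = comp (Bm (tau X)) (comp (tau (Bo X)) (Bm (tau X)));
  rel_bubble : forall X, comp (cap X) (cup X) = (t%:R : k) *: idm V X;
  rel_zigzag1 : forall X, comp (cap (Bo X)) (Bm (cup X)) = idm V (Bo X);
  rel_zigzag2 : forall X, comp (Bm (cap X)) (cup (Bo X)) = idm V (Bo X);
  rel_captau : forall X, comp (cap X) (tau X) = 0;
  rel_tauslide : forall X,
      comp (Bm (cap X)) (tau (Bo X)) = comp (cap (Bo X)) (Bm (tau X));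
  rel_dot : forall X,
      comp (xx (Bo X)) (tau X) - comp (tau X) (Bm (xx X))
      = idm V (Bo (Bo X)) - comp (cup X) (cap X);
  rel_capdot : forall X,
      comp (cap X) (Bm (xx X)) = - comp (cap X) (xx (Bo X))
}.
Arguments Bo {_ _ _} _ _.
Arguments xx {_ _ _} _ _.

Fixpoint cpow (k : fieldType) (V : kcat k) (X : ob V) (a : hom V X X) (n : nat)
  : hom V X X :=
  match n with 0 => idm V X | n'.+1 => comp a (cpow a n') end.

Definition peval (k : fieldType) (V : kcat k) (X : ob V) (p : {poly k})
  (a : hom V X X) : hom V X X :=
  \sum_(i < size p) p`_i *: cpow a i.

(** p is the minimal polynomial of a in End(X): monic, annihilates a, and of
    least degree among nonzero annihilating polynomials.  (If X = 0, i.e.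
    End(X) = 0, this gives p = 1, matching the paper's convention.) *)
Definition is_minpoly (k : fieldType) (V : kcat k) (X : ob V) (a : hom V X X)
  (p : {poly k}) : Prop :=
  p \is monic /\ peval p a = 0 /\
  forall q : {poly k}, q != 0 -> peval q a = 0 -> (size p <= size q)%N.

Definition findim_hom (k : fieldType) (V : kcat k) (X Y : ob V) : Prop :=
  exists s : seq (hom V X Y), forall f : hom V X Y,
    exists c : nat -> k, f = \sum_(i < size s) c i *: s`_i.

Definition End_is_k (k : fieldType) (V : kcat k) (L : ob V) : Prop :=
  idm V L != 0 /\ forall f : hom V L L, exists c : k, f = c *: idm V L.

Definition special (k : fieldType) (t : bool) (V : kcat k) (M : NBmodule t V)
  (L : ob V) : Prop :=
  End_is_k L /\ findim_hom (Bo M L) (Bo M L).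

From Pilot Require Import Defs.
From mathcomp Require Import all_boot all_order all_algebra.
Import GRing.Theory.
Local Open Scope ring_scope.

(* Since End(L) = k, the dotted bubbles cap ∘ (1⋆x)^n ∘ cup act on L by
   scalars b_n, with b_0 = t.  Sliding the dot through tau (the dot relation)
   and through the cup (x⋆1 ∘ cup = - 1⋆x ∘ cup) shows by induction that
   tau ∘ (1⋆x)^n ∘ cup = B(P_n(x)) ∘ cup for explicit polynomials P_n of degree
   < n.  As tau ∘ cup = 0, the relation m_L(x) = 0 yields B(Q(x)) ∘ cup = 0
   for Q = Σ_i m_i P_i, and f ↦ B(f) ∘ cup is injective by the zigzag
   relations; so Q(x) = 0 with deg Q < deg m_L, whence Q = 0.  The top
   coefficient of Q is -t or t - 1 according as deg m_L is even or odd.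
   The degenerate case m_L = 1 means BL = 0, so cup = 0 and the bubble
   relation cap ∘ cup = t forces t = 0. *)

Local Notation "f ∘ g" := (Defs.comp f g) (at level 35, right associativity).

Section LinearCategory.
Context {k : fieldType} {V : kcat k}.

Section Composition.
Variables X Y Z : ob V.

Lemma compDl (f g : Defs.hom V Y Z) (h : Defs.hom V X Y) :
  (f + g) ∘ h = f ∘ h + g ∘ h.
Proof. by have := comp_linl 1 f g h; rewrite !scale1r. Qed.

Lemma compDr (f : Defs.hom V Y Z) (g h : Defs.hom V X Y) :
  f ∘ (g + h) = f ∘ g + f ∘ h.
Proof. by have := comp_linr 1 f g h; rewrite !scale1r. Qed.

Lemma comp0l (h : Defs.hom V X Y) : (0 : Defs.hom V Y Z) ∘ h = 0.
Proof. by apply: (addrI (0 ∘ h)); rewrite -compDl !addr0. Qed.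

Lemma comp0r (f : Defs.hom V Y Z) : f ∘ (0 : Defs.hom V X Y) = 0.
Proof. by apply: (addrI (f ∘ 0)); rewrite -compDr !addr0. Qed.

Lemma compZl (a : k) (f : Defs.hom V Y Z) (h : Defs.hom V X Y) :
  (a *: f) ∘ h = a *: (f ∘ h).
Proof. by have := comp_linl a f 0 h; rewrite !addr0 comp0l addr0. Qed.

Lemma compZr (a : k) (f : Defs.hom V Y Z) (h : Defs.hom V X Y) :
  f ∘ (a *: h) = a *: (f ∘ h).
Proof. by have := comp_linr a f h 0; rewrite !addr0 comp0r addr0. Qed.

Lemma compNl (f : Defs.hom V Y Z) (h : Defs.hom V X Y) : (- f) ∘ h = - (f ∘ h).
Proof. by rewrite -scaleN1r compZl scaleN1r. Qed.

Lemma compNr (f : Defs.hom V Y Z) (h : Defs.hom V X Y) : f ∘ (- h) = - (f ∘ h).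
Proof. by rewrite -scaleN1r compZr scaleN1r. Qed.

Lemma compBl (f g : Defs.hom V Y Z) (h : Defs.hom V X Y) :
  (f - g) ∘ h = f ∘ h - g ∘ h.
Proof. by rewrite compDl compNl. Qed.

Lemma comp_suml n (F : 'I_n -> Defs.hom V Y Z) (h : Defs.hom V X Y) :
  (\sum_(i < n) F i) ∘ h = \sum_(i < n) F i ∘ h.
Proof. exact: (big_morph (Defs.comp^~ h) (fun f g => compDl f g h) (comp0l h)). Qed.

Lemma comp_sumr n (f : Defs.hom V Y Z) (F : 'I_n -> Defs.hom V X Y) :
  f ∘ (\sum_(i < n) F i) = \sum_(i < n) f ∘ F i.
Proof. exact: (big_morph (Defs.comp f) (compDr f) (comp0r f)). Qed.

End Composition.

Section Polynomials.
Context {X : ob V} {a : Defs.hom V X X}.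

Lemma cpowSr n : cpow a n.+1 = cpow a n ∘ a.
Proof.
elim: n => [|n IHn] /=; first by rewrite comp1m compm1.
by rewrite -Defs.compA -IHn.
Qed.

Lemma peval_widen {p : {poly k}} {n} :
  (size p <= n)%N -> peval p a = \sum_(i < n) p`_i *: cpow a i.
Proof.
move=> le_p_n; rewrite /peval (big_ord_widen n (fun i => p`_i *: cpow a i)) //.
rewrite big_mkcond; apply: eq_bigr => i _.
by case: ifPn => // /negbTE; rewrite ltnNge => /negbFE/(nth_default 0)->; rewrite scale0r.
Qed.

Lemma peval0 : peval 0 a = 0.
Proof. by rewrite /peval size_poly0 big_ord0. Qed.

Lemma pevalD (p q : {poly k}) : peval (p + q) a = peval p a + peval q a.
Proof.
rewrite (peval_widen (size_polyD p q)) (peval_widen (leq_maxl (size p) (size q))).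
rewrite (peval_widen (leq_maxr (size p) (size q))) -big_split.
by apply: eq_bigr => i _; rewrite coefD scalerDl.
Qed.

Lemma pevalZ (c : k) (p : {poly k}) : peval (c *: p) a = c *: peval p a.
Proof.
rewrite (peval_widen (size_scale_leq c p)) scaler_sumr.
by apply: eq_bigr => i _; rewrite coefZ scalerA.
Qed.

Lemma pevalN (p : {poly k}) : peval (- p) a = - peval p a.
Proof. by apply: (addrI (peval p a)); rewrite -pevalD !subrr peval0. Qed.

Lemma pevalXn n : peval 'X^n a = cpow a n.
Proof.
rewrite /peval size_polyXn big_ord_recr /= coefXn eqxx scale1r big1 ?add0r //.
by move=> i _; rewrite coefXn (ltn_eqF (ltn_ord i)) scale0r.
Qed.

Lemma pevalC (c : k) : peval c%:P a = c *: idm V X.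
Proof. by rewrite (peval_widen (size_polyC_leq1 c)) big_ord1 coefC. Qed.

Lemma pevalMX (p : {poly k}) : peval (p * 'X) a = peval p a ∘ a.
Proof.
have size_pX : (size (p * 'X)%R <= (size p).+1)%N.
  by rewrite (leq_trans (size_polyMleq p 'X)) // size_polyX addn2.
rewrite (peval_widen size_pX) big_ord_recl coefMX eqxx scale0r add0r comp_suml.
by apply: eq_bigr => i _; rewrite coefMX /= compZl -cpowSr.
Qed.

Lemma idm_eq0_of_size1_root {p : {poly k}} :
  p \is monic -> peval p a = 0 -> size p = 1%N -> idm V X = 0.
Proof.
move=> p_monic pa0 size_p; have lead_p := monicP p_monic.
move: lead_p pa0; rewrite (size1_polyC (eq_leq size_p)) lead_coefC pevalC.
by move=> ->; rewrite scale1r.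
Qed.

End Polynomials.

Section NBmodule.
Context {t : bool} (M : NBmodule t V).

Section Functor.
Variables X Y : ob V.

Lemma BmD (f g : Defs.hom V X Y) : Bm M (f + g) = Bm M f + Bm M g.
Proof. by have := Bm_lin M 1 f g; rewrite !scale1r. Qed.

Lemma Bm0 : Bm M (0 : Defs.hom V X Y) = 0.
Proof. by apply: (addrI (Bm M 0)); rewrite -BmD !addr0. Qed.

Lemma BmZ (a : k) (f : Defs.hom V X Y) : Bm M (a *: f) = a *: Bm M f.
Proof. by have := Bm_lin M a f 0; rewrite !addr0 Bm0 addr0. Qed.

Lemma BmN (f : Defs.hom V X Y) : Bm M (- f) = - Bm M f.
Proof. by rewrite -scaleN1r BmZ scaleN1r. Qed.

Lemma Bm_sum n (F : 'I_n -> Defs.hom V X Y) :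
  Bm M (\sum_(i < n) F i) = \sum_(i < n) Bm M (F i).
Proof. exact: (big_morph _ BmD Bm0). Qed.

End Functor.

Lemma Bm_cpow {X} (a : Defs.hom V X X) n : Bm M (cpow a n) = cpow (Bm M a) n.
Proof. by elim: n => [|n IHn] /=; rewrite ?Bm_id // Bm_comp IHn. Qed.

Lemma Bm_peval {X} (p : {poly k}) (a : Defs.hom V X X) :
  Bm M (peval p a) = peval p (Bm M a).
Proof. by rewrite /peval Bm_sum; apply: eq_bigr => i _; rewrite BmZ Bm_cpow. Qed.

Lemma t_false_of_Bo0 {X} : idm V X != 0 -> idm V (Bo M X) = 0 -> t = false.
Proof.
move=> idX_neq0 idBX0; have cupX0 : cup M X = 0.
  by rewrite -[cup M X]comp1m -Bm_id idBX0 Bm0 comp0l.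
have := rel_bubble M X; rewrite cupX0 comp0r => /esym/eqP.
by rewrite scaler_eq0 (negPf idX_neq0) orbF; case: t; rewrite ?oner_eq0.
Qed.

Lemma cup_mateK {X} (g : Defs.hom V X (Bo M (Bo M X))) :
  g = Bm M (cap M (Bo M X) ∘ Bm M g) ∘ cup M X.
Proof. by rewrite Bm_comp -Defs.compA -cup_nat Defs.compA rel_zigzag2 comp1m. Qed.

Lemma cap_mateK {X} (f : Defs.hom V (Bo M X) (Bo M X)) :
  f = cap M (Bo M X) ∘ Bm M (Bm M f ∘ cup M X).
Proof. by rewrite Bm_comp Defs.compA cap_nat -Defs.compA rel_zigzag1 compm1. Qed.

Lemma Bm_cup_eq0 {X} (f : Defs.hom V (Bo M X) (Bo M X)) :
  Bm M f ∘ cup M X = 0 -> f = 0.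
Proof. by move=> fd0; rewrite (cap_mateK f) fd0 Bm0 comp0r. Qed.

Lemma xx_cup X : xx M (Bo M X) ∘ cup M X = - Bm M (xx M X) ∘ cup M X.
Proof.
rewrite {1}(cup_mateK (xx M (Bo M X) ∘ cup M X)) [Bm M (xx _ _ ∘ _)]Bm_comp.
rewrite Defs.compA rel_capdot.
by rewrite compNl -Defs.compA xx_nat Defs.compA rel_zigzag1 comp1m BmN compNl.
Qed.

Lemma tau_rotate X :
  tau M X = Bm M (Bm M (cap M X)) ∘ Bm M (tau M (Bo M X)) ∘ cup M (Bo M (Bo M X)).
Proof.
rewrite Defs.compA -Bm_comp rel_tauslide Bm_comp -Defs.compA -cup_nat.
by rewrite Defs.compA rel_zigzag2 comp1m.
Qed.

Lemma tau_Bm_cup X :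
  tau M (Bo M X) ∘ Bm M (cup M X) = Bm M (tau M X) ∘ cup M (Bo M X).
Proof.
rewrite tau_rotate -!Defs.compA cup_nat [Bm M (tau _ _) ∘ _]Defs.compA.
rewrite -[Bm M (tau _ _) ∘ _]Bm_comp tau_nat Bm_comp !Defs.compA.
rewrite -[Bm M (Bm M (cap _ _)) ∘ _]Bm_comp -[Bm M (cap _ _) ∘ _]Bm_comp.
by rewrite rel_zigzag1 !Bm_id comp1m.
Qed.

Lemma tau_cup X : tau M X ∘ cup M X = 0.
Proof.
rewrite (cup_mateK (tau M X ∘ cup M X)) [Bm M (tau _ _ ∘ _)]Bm_comp.
rewrite Defs.compA -rel_tauslide -Defs.compA tau_Bm_cup Defs.compA -Bm_comp.
by rewrite rel_captau Bm0 comp0l Bm0 comp0l.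
Qed.

Section CupEvaluation.
Variable X : ob V.

Definition cup_eval (p : {poly k}) := Bm M (peval p (xx M X)) ∘ cup M X.

Lemma cup_eval0 : cup_eval 0 = 0.
Proof. by rewrite /cup_eval peval0 Bm0 comp0l. Qed.

Lemma cup_evalD p q : cup_eval (p + q) = cup_eval p + cup_eval q.
Proof. by rewrite /cup_eval pevalD BmD compDl. Qed.

Lemma cup_evalN p : cup_eval (- p) = - cup_eval p.
Proof. by rewrite /cup_eval pevalN BmN compNl. Qed.

Lemma cup_evalZ a p : cup_eval (a *: p) = a *: cup_eval p.
Proof. by rewrite /cup_eval pevalZ BmZ compZl. Qed.

Lemma cup_evalXn n : cup_eval 'X^n = cpow (Bm M (xx M X)) n ∘ cup M X.
Proof. by rewrite /cup_eval pevalXn Bm_cpow. Qed.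

Lemma cup_evalC a : cup_eval a%:P = a *: cup M X.
Proof. by rewrite /cup_eval pevalC BmZ Bm_id compZl comp1m. Qed.

Lemma xx_cup_eval p : xx M (Bo M X) ∘ cup_eval p = - cup_eval (p * 'X).
Proof.
rewrite /cup_eval Defs.compA xx_nat -Defs.compA xx_cup compNr Defs.compA.
by rewrite -Bm_comp pevalMX.
Qed.

Lemma cup_eval_eq0 p : cup_eval p = 0 -> peval p (xx M X) = 0.
Proof. exact: Bm_cup_eq0. Qed.

End CupEvaluation.
End NBmodule.
End LinearCategory.

Section TauPolynomials.
Context {R : nzRingType} (b : nat -> R).

(* The recurrence is read off from the dot relation
   x⋆1 ∘ tau = tau ∘ 1⋆x + 1 - cup ∘ cap, see [tau_dots_cup]. *)
Fixpoint taupoly n : {poly R} :=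
  if n is n'.+1 then - (taupoly n' * 'X) - 'X^n' + (b n')%:P else 0.

Lemma size_taupoly n : (size (taupoly n) <= n)%N.
Proof.
elim: n => [|n IHn] /=; first by rewrite size_poly0.
rewrite (leq_trans (size_polyD _ _)) // geq_max (leq_trans (size_polyC_leq1 _)) //.
rewrite andbT (leq_trans (size_polyD _ _)) // geq_max !size_polyN size_polyXn leqnn.
by rewrite (leq_trans (size_polyMleq _ _)) // size_polyX addn2.
Qed.

Lemma coef_taupoly n : (taupoly n.+1)`_n = if odd n then - b 0 else b 0 - 1.
Proof.
elim: n => [|n IHn].
  by rewrite /= !coefD !coefN coefMX coefXn coefC oppr0 sub0r addrC.
rewrite [taupoly n.+2]/= !coefD !coefN coefMX coefXn coefC /= IHn eqxx.
by case: (odd n); rewrite /= addr0 ?opprK // opprB addrAC subrr sub0r.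
Qed.

Definition taupoly_comb (m : {poly R}) := \sum_(i < size m) m`_i *: taupoly i.

Lemma size_taupoly_comb m : (size (taupoly_comb m) <= (size m).-1)%N.
Proof.
apply: (big_ind (fun p : {poly R} => size p <= (size m).-1)%N).
- by rewrite size_poly0.
- by move=> p q size_p size_q; rewrite (leq_trans (size_polyD _ _)) // geq_max size_p.
- move=> i _; rewrite (leq_trans (size_scale_leq _ _)) // (leq_trans (size_taupoly _)) //.
  by rewrite -ltnS prednK ?ltn_ord // (leq_ltn_trans _ (ltn_ord i)).
Qed.

Lemma coef_taupoly_comb (m : {poly R}) s : size m = s.+2 ->
  (taupoly_comb m)`_s = lead_coef m * (if odd s then - b 0 else b 0 - 1).
Proof.
move=> size_m; rewrite /taupoly_comb coef_sum size_m big_ord_recr /= big1 ?add0r.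
  by rewrite coefZ coef_taupoly lead_coefE size_m.
move=> i _; rewrite coefZ [(taupoly i)`_s]nth_default ?mulr0 //.
by rewrite (leq_trans (size_taupoly _)) // -ltnS.
Qed.

End TauPolynomials.

Section DottedBubbles.
Context {k : fieldType} {V : kcat k} {t : bool} {M : NBmodule t V} {X : ob V}.
Context {b : nat -> k}.
Hypothesis bubbleE : forall n,
  cap M X ∘ cpow (Bm M (xx M X)) n ∘ cup M X = b n *: idm V X.

Lemma tau_dots_cup n :
  tau M X ∘ cpow (Bm M (xx M X)) n ∘ cup M X = cup_eval M X (taupoly b n).
Proof.
elim: n => [|n IHn] /=; first by rewrite comp1m tau_cup cup_eval0.
have dotE : tau M X ∘ Bm M (xx M X)
    = xx M (Bo M X) ∘ tau M X - (idm V _ - cup M X ∘ cap M X).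
  by rewrite -(rel_dot M X) subKr.
rewrite !Defs.compA dotE -Defs.compA !compBl comp1m -!Defs.compA IHn bubbleE.
rewrite compZr compm1 xx_cup_eval !cup_evalD !cup_evalN cup_evalXn cup_evalC.
by rewrite opprB addrA addrAC.
Qed.

Lemma peval_taupoly_comb m :
  peval m (xx M X) = 0 -> peval (taupoly_comb b m) (xx M X) = 0.
Proof.
move=> mx0; apply: cup_eval_eq0.
rewrite /taupoly_comb (big_morph _ (cup_evalD M X) (cup_eval0 M X)).
under eq_bigr => i _ do rewrite cup_evalZ -tau_dots_cup -compZr -compZl.
by rewrite -comp_sumr -comp_suml -/(peval m _) -Bm_peval mx0 Bm0 comp0l comp0r.
Qed.

End DottedBubbles.

Lemma dotted_bubbles_scalar {k : fieldType} {V : kcat k} {t : bool}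
    (M : NBmodule t V) {X : ob V} :
  End_is_k X -> exists2 b : nat -> k, b 0%N = t%:R &
    forall n, cap M X ∘ cpow (Bm M (xx M X)) n ∘ cup M X = b n *: idm V X.
Proof.
move=> [idX_neq0 EndX].
have scalar f : exists a : k, f == a *: idm V X by have [a ->] := EndX f; exists a.
pose b n := xchoose (scalar (cap M X ∘ cpow (Bm M (xx M X)) n ∘ cup M X)).
have bubbleE n : cap M X ∘ cpow (Bm M (xx M X)) n ∘ cup M X = b n *: idm V X.
  exact/eqP/(xchooseP (scalar _)).
exists b => //; have : (b 0%N - t%:R) *: idm V X = 0.
  by rewrite scalerBl -bubbleE /= comp1m rel_bubble subrr.
by move/eqP; rewrite scaler_eq0 (negPf idX_neq0) orbF subr_eq0 => /eqP.
Qed.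

Theorem corollary3p11 (k : fieldType) (hk : (2%:R : k) != 0) (t : bool)
  (V : kcat k) (M : NBmodule t V) (L : ob V) :
  special M L ->
  forall m : {poly k}, is_minpoly (xx M L) m -> odd (size m).-1 = t.
Proof.
move=> [EndL _] m [m_monic [m_x m_min]].
have [b b0 bubbleE] := dotted_bubbles_scalar M EndL.
have [idL_neq0 _] := EndL.
case size_m: (size m) => [|[|s]] /=.
- by move: (monic_neq0 m_monic); rewrite -size_poly_gt0 size_m.
- by rewrite (t_false_of_Bo0 M idL_neq0 (idm_eq0_of_size1_root m_monic m_x size_m)).
have q0 : taupoly_comb b m = 0.
  apply/eqP; apply: contraT => q_neq0.
  have := m_min _ q_neq0 (peval_taupoly_comb bubbleE m m_x).
  by move/leq_trans/(_ (size_taupoly_comb b m)); rewrite size_m ltnn.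
have := coef_taupoly_comb b m s size_m; rewrite q0 coef0 (monicP m_monic) mul1r b0.
by case: (odd s); case: (t) => /= /esym/eqP; rewrite ?sub0r ?oppr_eq0 ?oner_eq0.
Qed.
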